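(* Let $(\psi,p,A)$ be a regular normal extremal containing an interior three-bang block $X(\tau_X)\,Y(\ell)\,X(\tau_X)$, i.e. three consecutive arcs, an $X$-arc of length $\tau_X=\pi/\sin\gamma$, a $Y$-arc of length $\ell\in(0,2\pi)$, and an $X$-arc of length $\tau_X$, whose initial and final times are both switching times. If the reduced data at the initial time of the block are $(0,a,b)$ with $a\neq0$, then the reduced data at its final time are $(0,-a,b)$, i.e. the same as those produced by a single switching-to-switching $Y$-arc started from $(0,a,b)$, while the block has total length $2\pi/\sin\gamma+\ell$, strictly larger than the length (in $(0,2\pi)$) of that $Y$-arc. Consequently, such an interior $XYX$ block cannot occur on a regular normal time-optimal extremal.
   Context: Fix $\gamma\in(0,\pi/2)$, $s=\sin\gamma$, $c=\cos\gamma$, and $X=\begin{pmatrix}0&s^2&sc\\-s^2&0&0\\-sc&0&0\end{pmatrix}$, $Y=\begin{pmatrix}0&1&0\\-1&0&0\\0&0&0\end{pmatrix}$ on $\mathbb R^3$ with standard basis $e_1,e_2,e_3$ and standard inner product. Let $\Sigma=\{\psi:\langle e_3,\psi\rangle=0\}$, $\psi_0=(0,s,c)^\top$. Time-optimal problem: over piecewise constant controls $A:[0,T]\to\{X,Y\}$ with finitely many discontinuities (switching times) and trajectories $\dot\psi=A(t)\psi$, $\psi(0)=\psi_0$, minimize $T$ subject to $\psi(T)\in\Sigma$. Maximal intervals on which $A\equiv X$ (resp. $Y$) are $X$-arcs (resp. $Y$-arcs), also called bangs. A normal extremal is such a trajectory with a nonzero absolutely continuous costate $p$ satisfying $\dot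 p=-A(t)^\top p$ and, for a.e. $t$, $\langle p,A(t)\psi\rangle-1=\max_{B\in\{X,Y\}}(\langle p,B\psi\rangle-1)$. Let $F_1=X-Y$, $F_2=[X,Y]$, $F_3=[Y,[X,Y]]$, and reduced data $(\phi_1,\phi_2,\phi_3)$ with $\phi_i=\langle p,F_i\psi\rangle$; the switching function is $\Phi=\phi_1$. A normal extremal is regular (bang–bang) if $\Phi$ vanishes only at isolated times and at every switching time $\phi_1=0$ and $\phi_2\neq 0$. Time-optimal means the trajectory solves the minimization problem. *)

From Stdlib Require Import Reals Lra Lia.
Open Scope R_scope.

Record vec3 := V3 { v1 : R; v2 : R; v3 : R }.
Record mat3 := M3 { m11 : R; m12 : R; m13 : R;
                    m21 : R; m22 : R; m23 : R;
                    m31 : R; m32 : R; m33 : R }.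

Definition vzero : vec3 := V3 0 0 0.
Definition dot (u w : vec3) : R := v1 u * v1 w + v2 u * v2 w + v3 u * v3 w.
Definition mv (M : mat3) (u : vec3) : vec3 :=
  V3 (m11 M * v1 u + m12 M * v2 u + m13 M * v3 u)
     (m21 M * v1 u + m22 M * v2 u + m23 M * v3 u)
     (m31 M * v1 u + m32 M * v2 u + m33 M * v3 u).
Definition mmul (A B : mat3) : mat3 :=
  M3 (m11 A * m11 B + m12 A * m21 B + m13 A * m31 B)
     (m11 A * m12 B + m12 A * m22 B + m13 A * m32 B)
     (m11 A * m13 B + m12 A * m23 B + m13 A * m33 B)
     (m21 A * m11 B + m22 A * m21 B + m23 A * m31 B)
     (m21 A * m12 B + m22 A * m22 B + m23 A * m32 B)
     (m21 A * m13 B + m22 A * m23 B + m23 A * m33 B)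
     (m31 A * m11 B + m32 A * m21 B + m33 A * m31 B)
     (m31 A * m12 B + m32 A * m22 B + m33 A * m32 B)
     (m31 A * m13 B + m32 A * m23 B + m33 A * m33 B).
Definition msub (A B : mat3) : mat3 :=
  M3 (m11 A - m11 B) (m12 A - m12 B) (m13 A - m13 B)
     (m21 A - m21 B) (m22 A - m22 B) (m23 A - m23 B)
     (m31 A - m31 B) (m32 A - m32 B) (m33 A - m33 B).
Definition mopp (A : mat3) : mat3 :=
  M3 (- m11 A) (- m12 A) (- m13 A) (- m21 A) (- m22 A) (- m23 A)
     (- m31 A) (- m32 A) (- m33 A).
Definition mtr (A : mat3) : mat3 :=
  M3 (m11 A) (m21 A) (m31 A) (m12 A) (m22 A) (m32 A) (m13 A) (m23 A) (m33 A).
Definition bracket (A B : mat3) : mat3 := msub (mmul A B) (mmul B A).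

Definition Xm (g : R) : mat3 :=
  M3 0 (sin g ^ 2) (sin g * cos g)
     (- sin g ^ 2) 0 0
     (- (sin g * cos g)) 0 0.
Definition Ym : mat3 := M3 0 1 0 (-1) 0 0 0 0 0.

Definition F1 (g : R) : mat3 := msub (Xm g) Ym.
Definition F2 (g : R) : mat3 := bracket (Xm g) Ym.
Definition F3 (g : R) : mat3 := bracket Ym (bracket (Xm g) Ym).

Definition psi0 (g : R) : vec3 := V3 0 (sin g) (cos g).
Definition inSigma (u : vec3) : Prop := v3 u = 0.

Definition redd (g : R) (psi p : vec3) : vec3 :=
  V3 (dot p (mv (F1 g) psi)) (dot p (mv (F2 g) psi)) (dot p (mv (F3 g) psi)).
Definition Phi (g : R) (psi p : vec3) : R := dot p (mv (F1 g) psi).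

Inductive ctrl := CX | CY.
Definition cmat (g : R) (c : ctrl) : mat3 :=
  match c with CX => Xm g | CY => Ym end.

Definition deriv_vec (f : R -> vec3) (u : R) (d : vec3) : Prop :=
  derivable_pt_lim (fun s => v1 (f s)) u (v1 d) /\
  derivable_pt_lim (fun s => v2 (f s)) u (v2 d) /\
  derivable_pt_lim (fun s => v3 (f s)) u (v3 d).
Definition cont_vec (f : R -> vec3) : Prop :=
  forall u, continuity_pt (fun s => v1 (f s)) u /\
            continuity_pt (fun s => v2 (f s)) u /\
            continuity_pt (fun s => v3 (f s)) u.

(* A piecewise constant bang-bang control on [0,T]: arcs (sw i, sw (i+1)),
   i < n_arcs, carrying control lab i; consecutive labels differ, so the arcs
   are the maximal X-/Y-arcs and the switching times are sw j, 1 <= j <= n-1. *)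
Record schedule := Sched { n_arcs : nat; sw : nat -> R; lab : nat -> ctrl }.

Definition admissible (S : schedule) (T : R) : Prop :=
  (1 <= n_arcs S)%nat /\ sw S 0 = 0 /\ sw S (n_arcs S) = T /\
  (forall i, (i < n_arcs S)%nat -> sw S i < sw S (i + 1)) /\
  (forall i, (i + 1 < n_arcs S)%nat -> lab S i <> lab S (i + 1)).

Definition trajectory (g : R) (S : schedule) (psi : R -> vec3) : Prop :=
  cont_vec psi /\ psi 0 = psi0 g /\
  forall i u, (i < n_arcs S)%nat -> sw S i < u < sw S (i + 1) ->
    deriv_vec psi u (mv (cmat g (lab S i)) (psi u)).

Definition normal_extremal (g T : R) (S : schedule) (psi p : R -> vec3) : Prop :=
  admissible S T /\ trajectory g S psi /\
  cont_vec p /\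
  (exists u, 0 <= u <= T /\ p u <> vzero) /\
  (forall i u, (i < n_arcs S)%nat -> sw S i < u < sw S (i + 1) ->
     deriv_vec p u (mv (mopp (mtr (cmat g (lab S i)))) (p u)) /\
     dot (p u) (mv (cmat g (lab S i)) (psi u)) - 1 =
       Rmax (dot (p u) (mv (Xm g) (psi u)) - 1)
            (dot (p u) (mv Ym (psi u)) - 1)).

Definition regular (g T : R) (S : schedule) (psi p : R -> vec3) : Prop :=
  (forall u, 0 <= u <= T -> Phi g (psi u) (p u) = 0 ->
     exists d, 0 < d /\ forall v, 0 <= v <= T -> 0 < Rabs (v - u) < d ->
       Phi g (psi v) (p v) <> 0) /\
  (forall j, (1 <= j)%nat -> (j <= n_arcs S - 1)%nat ->
     v1 (redd g (psi (sw S j)) (p (sw S j))) = 0 /\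
     v2 (redd g (psi (sw S j)) (p (sw S j))) <> 0).

Definition time_optimal (g T : R) (S : schedule) (psi : R -> vec3) : Prop :=
  admissible S T /\ trajectory g S psi /\ inSigma (psi T) /\
  forall T' S' psi', admissible S' T' -> trajectory g S' psi' ->
    inSigma (psi' T') -> T <= T'.

Definition Y_arc (L : R) (psi p : R -> vec3) : Prop :=
  cont_vec psi /\ cont_vec p /\
  forall u, 0 < u < L ->
    deriv_vec psi u (mv Ym (psi u)) /\
    deriv_vec p u (mv (mopp (mtr Ym)) (p u)).

From Stdlib Require Import Reals Lra Lia Psatz.
From Coquelicot Require Import Coquelicot.
Open Scope R_scope.

(* Since the controls are skew-symmetric, h = psi x p obeys the same equation
   h' = A h as psi, and the reduced data are an injective linear image of h.
   On the switching surface phi1 = 0, h = x e1 + y n with n = (0, cos g, -sin g)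
   the rotation axis of X; an X-arc of length pi / sin g is the half-turn about
   n, sending x to -x.  The Y-arc rotates about e3, and regularity at the
   switching time after it means that it maps x e1 + y n to -x e1 + y n
   as well.  Hence the block X Y X acts on h, and so on the reduced data, as
   the Y-arc of length 2 pi - l, which does not cross the switching surface in
   between.  Finally, the block is longer than 2 pi / sin g, while a single
   X-arc already reaches Sigma at time pi / (2 sin g). *)

Definition cross (u w : vec3) : vec3 :=
  V3 (v2 u * v3 w - v3 u * v2 w) (v3 u * v1 w - v1 u * v3 w)
     (v1 u * v2 w - v2 u * v1 w).

Definition skew (M : mat3) : Prop :=
  m11 M = 0 /\ m22 M = 0 /\ m33 M = 0 /\
  m21 M = - m12 M /\ m31 M = - m13 M /\ m32 M = - m23 M.

Ltac unfold_mat :=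
  cbv beta iota delta [redd cross dot mv mopp mtr F1 F2 F3 bracket msub mmul
    Xm Ym cmat v1 v2 v3 m11 m12 m13 m21 m22 m23 m31 m32 m33] in *.

Lemma skew_cmat g c : skew (cmat g c).
Proof. destruct c; unfold skew; unfold_mat; repeat split; ring. Qed.

Lemma derivable_pt_lim_eq f x l l' :
  derivable_pt_lim f x l -> l = l' -> derivable_pt_lim f x l'.
Proof. now intros H <-. Qed.

Lemma cont_vec_of_deriv (f d : R -> vec3) :
  (forall u, deriv_vec f u (d u)) -> cont_vec f.
Proof.
  intros H u. destruct (H u) as (H1 & H2 & H3).
  repeat split; apply derivable_continuous_pt; eexists; eassumption.
Qed.

Lemma cont_vec_cross psi p :
  cont_vec psi -> cont_vec p -> cont_vec (fun t => cross (psi t) (p t)).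
Proof.
  intros Cpsi Cp u. destruct (Cpsi u) as (a1 & a2 & a3), (Cp u) as (b1 & b2 & b3).
  unfold cross; cbn [v1 v2 v3].
  repeat split; apply continuity_pt_minus; apply continuity_pt_mult; assumption.
Qed.

Lemma deriv_vec_cross M psi p u : skew M ->
  deriv_vec psi u (mv M (psi u)) -> deriv_vec p u (mv (mopp (mtr M)) (p u)) ->
  deriv_vec (fun t => cross (psi t) (p t)) u (mv M (cross (psi u) (p u))).
Proof.
  intros (e1 & e2 & e3 & e4 & e5 & e6) (a1 & a2 & a3) (b1 & b2 & b3).
  destruct M; unfold deriv_vec in *; unfold_mat; subst.
  repeat split; (eapply derivable_pt_lim_eq;
    [apply derivable_pt_lim_minus; apply derivable_pt_lim_mult; eassumption
     | simpl; ring]).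
Qed.

Lemma skew_ode_unique M f F t0 t1 : skew M -> t0 <= t1 ->
  cont_vec f -> cont_vec F ->
  (forall u, t0 < u < t1 -> deriv_vec f u (mv M (f u))) ->
  (forall u, t0 < u < t1 -> deriv_vec F u (mv M (F u))) ->
  f t0 = F t0 -> f t1 = F t1.
Proof.
  intros (e1 & e2 & e3 & e4 & e5 & e6) Ht Cf CF Df DF H0.
  set (E := fun t => (v1 (f t) - v1 (F t)) * (v1 (f t) - v1 (F t))
     + (v2 (f t) - v2 (F t)) * (v2 (f t) - v2 (F t))
     + (v3 (f t) - v3 (F t)) * (v3 (f t) - v3 (F t))).
  (* E' = 2 (f - F) . M (f - F) = 0 since M is skew *)
  assert (DE : forall x, t0 < x < t1 -> derivable_pt_lim E x 0).
  { intros x Hx.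
    destruct (Df x Hx) as (a1 & a2 & a3), (DF x Hx) as (b1 & b2 & b3).
    eapply derivable_pt_lim_eq.
    - repeat apply derivable_pt_lim_plus;
        apply derivable_pt_lim_mult; apply derivable_pt_lim_minus; eassumption.
    - destruct M; unfold_mat; subst; ring. }
  assert (CE : forall x, t0 <= x <= t1 -> continuity_pt E x).
  { intros x _. destruct (Cf x) as (c1 & c2 & c3), (CF x) as (d1 & d2 & d3).
    repeat apply continuity_pt_plus;
      apply continuity_pt_mult; apply continuity_pt_minus; assumption. }
  pose (pr := fun x (P : t0 < x < t1) =>
    exist (fun l => derivable_pt_abs E x l) 0 (DE x P)).
  assert (E1 : E t1 = E t0)
    by (apply (null_derivative_loc E t0 t1 pr CE (fun x P => eq_refl)); lra).
  assert (E0 : E t0 = 0) by (unfold E; rewrite H0; ring).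
  rewrite E0 in E1. unfold E in E1.
  destruct (f t1) as [x1 x2 x3], (F t1) as [y1 y2 y3]; cbn [v1 v2 v3] in E1.
  pose proof (Rle_0_sqr (x1 - y1)); pose proof (Rle_0_sqr (x2 - y2));
    pose proof (Rle_0_sqr (x3 - y3)); unfold Rsqr in *.
  f_equal; apply Rminus_diag_uniq, Rsqr_0_uniq; unfold Rsqr; lra.
Qed.

(* X rotates with angular speed sin g about the axis (0, cos g, -sin g); k and m
   are the coordinates of h along (0, sin g, cos g) and along that axis. *)
Definition flowX (g t : R) (h : vec3) : vec3 :=
  let s := sin g in let c := cos g in
  let k := s * v2 h + c * v3 h in let m := c * v2 h - s * v3 h in
  let B := - v1 h * sin (s * t) + k * cos (s * t) in
  V3 (v1 h * cos (s * t) + k * sin (s * t)) (s * B + c * m) (c * B - s * m).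

Definition flowY (t : R) (h : vec3) : vec3 :=
  V3 (v1 h * cos t + v2 h * sin t) (- v1 h * sin t + v2 h * cos t) (v3 h).

Definition flow (g : R) (c : ctrl) : R -> vec3 -> vec3 :=
  match c with CX => flowX g | CY => flowY end.

Lemma flow_deriv g c t0 h u :
  deriv_vec (fun t => flow g c (t - t0) h) u (mv (cmat g c) (flow g c (u - t0) h)).
Proof.
  pose proof (sin2_cos2 g) as E; unfold Rsqr in E.
  destruct c, h as [h1 h2 h3]; unfold deriv_vec, flow, flowX, flowY; unfold_mat;
    repeat split; apply is_derive_Reals; auto_derive; try exact I;
    unfold Rminus; try ring.
  set (T := sin g * (u + - t0)). set (B := - h1 * sin T + (sin g * h2 + cos g * h3) * cos T).
  assert (sin g * B * (sin g * sin g + cos g * cos g) = sin g * B) by (rewrite E; ring).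
  unfold B in *; lra.
Qed.

Lemma flow_0 g c h : flow g c 0 h = h.
Proof.
  pose proof (sin2_cos2 g) as E; unfold Rsqr in E.
  destruct c, h as [h1 h2 h3]; unfold flow, flowX, flowY; cbn [v1 v2 v3];
    rewrite ?Rmult_0_r, sin_0, cos_0; f_equal; try ring.
  - transitivity (h2 * (sin g * sin g + cos g * cos g)); [ring | rewrite E; ring].
  - transitivity (h3 * (sin g * sin g + cos g * cos g)); [ring | rewrite E; ring].
Qed.

Lemma cont_vec_flow g c t0 h : cont_vec (fun t => flow g c (t - t0) h).
Proof. apply (cont_vec_of_deriv _ _ (flow_deriv g c t0 h)). Qed.

Lemma cross_on_arc g T S psi p i : normal_extremal g T S psi p -> (i < n_arcs S)%nat ->
  cross (psi (sw S (i + 1))) (p (sw S (i + 1))) =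
  flow g (lab S i) (sw S (i + 1) - sw S i) (cross (psi (sw S i)) (p (sw S i))).
Proof.
  intros ((_ & _ & _ & Hsw & _) & (Cpsi & _ & Dpsi) & Cp & _ & Dp) Hi.
  apply (skew_ode_unique (cmat g (lab S i)) (fun t => cross (psi t) (p t))
    (fun t => flow g (lab S i) (t - sw S i) (cross (psi (sw S i)) (p (sw S i))))
    (sw S i) (sw S (i + 1))).
  - apply skew_cmat.
  - left; auto.
  - apply cont_vec_cross; assumption.
  - apply cont_vec_flow.
  - intros u Hu. apply deriv_vec_cross; [apply skew_cmat | auto | apply (Dp i u Hi Hu)].
  - intros u _; apply flow_deriv.
  - now rewrite Rminus_diag, flow_0.
Qed.

Lemma cross_on_Y_arc L psi p u : Y_arc L psi p -> 0 <= u <= L ->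
  cross (psi u) (p u) = flowY u (cross (psi 0) (p 0)).
Proof.
  intros (Cpsi & Cp & D) Hu. rewrite <- (Rminus_0_r u) at 3.
  apply (skew_ode_unique Ym (fun t => cross (psi t) (p t))
    (fun t => flow 0 CY (t - 0) (cross (psi 0) (p 0))) 0 u).
  - apply (skew_cmat 0 CY).
  - lra.
  - apply cont_vec_cross; assumption.
  - apply cont_vec_flow.
  - intros v Hv. destruct (D v ltac:(lra)).
    apply deriv_vec_cross; [apply (skew_cmat 0 CY) | auto | auto].
  - intros v _; apply (flow_deriv 0 CY).
  - now rewrite Rminus_diag, flow_0.
Qed.

Definition rdata (g : R) (h : vec3) : vec3 :=
  V3 (cos g * (sin g * v2 h + cos g * v3 h)) (- (sin g * cos g) * v1 h)
     (sin g * cos g * v2 h).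

Lemma redd_cross g psi p : redd g psi p = rdata g (cross psi p).
Proof.
  pose proof (sin2_cos2 g) as E; unfold Rsqr in E.
  destruct psi as [x1 x2 x3], p as [y1 y2 y3]; unfold rdata; unfold_mat;
    f_equal; try ring.
  assert ((x1 * y2 - x2 * y1) * (sin g * sin g + cos g * cos g) = x1 * y2 - x2 * y1)
    by (rewrite E; ring).
  lra.
Qed.

Lemma rdata_inj g h h' : sin g * cos g <> 0 -> rdata g h = rdata g h' -> h = h'.
Proof.
  intros Hsc E. destruct h as [x1 x2 x3], h' as [y1 y2 y3].
  unfold rdata in E; cbn [v1 v2 v3] in E. injection E as E1 E2 E3.
  assert (Hc : cos g <> 0) by (intro C; apply Hsc; rewrite C; ring).
  assert (x1 = y1) by (apply (Rmult_eq_reg_l (- (sin g * cos g))); [exact E2 | lra]).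
  assert (x2 = y2) by (apply (Rmult_eq_reg_l (sin g * cos g)); [exact E3 | exact Hsc]).
  subst. f_equal.
  apply (Rmult_eq_reg_l (cos g * cos g)); [lra | now apply Rmult_integral_contrapositive].
Qed.

(* The vectors with phi1 = 0: x e1 plus y times the rotation axis of X. *)
Definition hsw (g x y : R) : vec3 := V3 x (cos g * y) (- sin g * y).

Lemma rdata_hsw g x y :
  rdata g (hsw g x y) = V3 0 (- (sin g * cos g) * x) (sin g * cos g * (cos g * y)).
Proof. unfold rdata, hsw; cbn [v1 v2 v3]; f_equal; ring. Qed.

Lemma flowX_half_turn g x y : sin g <> 0 ->
  flowX g (PI / sin g) (hsw g x y) = hsw g (- x) y.
Proof.
  intro Hs. pose proof (sin2_cos2 g) as E; unfold Rsqr in E.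
  unfold flowX, hsw; cbn [v1 v2 v3].
  replace (sin g * (PI / sin g)) with PI by (field; auto).
  rewrite sin_PI, cos_PI. f_equal; try ring.
  - transitivity (cos g * y * (sin g * sin g + cos g * cos g)); [ring | rewrite E; ring].
  - transitivity (- sin g * y * (sin g * sin g + cos g * cos g)); [ring | rewrite E; ring].
Qed.

Definition y_switch (x z u : R) : Prop := x * sin u + z * (1 - cos u) = 0.

Lemma phi1_flowY_hsw g x y u :
  v1 (rdata g (flowY u (hsw g x y))) =
  - (sin g * cos g) * (x * sin u + cos g * y * (1 - cos u)).
Proof. unfold rdata, flowY, hsw; cbn [v1 v2 v3]; ring. Qed.

Lemma y_switch_complement x z u : y_switch x z (2 * PI - u) <-> y_switch (- x) z u.
Proof.
  unfold y_switch. rewrite sin_minus, cos_minus, sin_2PI, cos_2PI.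
  split; intro H; lra.
Qed.

Lemma y_switch_half_angle x z u : 0 < u < 2 * PI -> y_switch x z u ->
  x * cos (u / 2) + z * sin (u / 2) = 0.
Proof.
  intros Hu H. unfold y_switch in H.
  assert (Hs : 0 < sin (u / 2)) by (apply sin_gt_0; lra).
  replace u with (2 * (u / 2)) in H by field.
  rewrite sin_2a, cos_2a_sin in H.
  assert (H' : 2 * sin (u / 2) * (x * cos (u / 2) + z * sin (u / 2)) = 0)
    by (rewrite <- H; ring).
  apply Rmult_integral in H' as [H' | H']; [lra | exact H'].
Qed.

Lemma y_switch_rotate x z u : 0 < u < 2 * PI -> y_switch x z u ->
  x * cos u + z * sin u = - x.
Proof.
  intros Hu H. pose proof (y_switch_half_angle x z u Hu H) as Hh.
  pose proof (sin2_cos2 (u / 2)) as E; unfold Rsqr in E.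
  replace u with (2 * (u / 2)) by field. rewrite sin_2a, cos_2a_sin.
  transitivity (x * (1 - 2 * (sin (u / 2) * sin (u / 2) + cos (u / 2) * cos (u / 2)))
    + 2 * cos (u / 2) * (x * cos (u / 2) + z * sin (u / 2))); [ring |].
  rewrite E, Hh; ring.
Qed.

Lemma y_switch_unique x z u v : x <> 0 -> 0 < u < 2 * PI -> 0 < v < 2 * PI ->
  y_switch x z u -> y_switch x z v -> u = v.
Proof.
  intros Hx Hu Hv Su Sv.
  pose proof (y_switch_half_angle x z u Hu Su) as Hu'.
  pose proof (y_switch_half_angle x z v Hv Sv) as Hv'.
  assert (D : x * sin (v / 2 - u / 2) = 0).
  { rewrite sin_minus.
    replace (x * (sin (v / 2) * cos (u / 2) - cos (v / 2) * sin (u / 2))) with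
      (sin (v / 2) * (x * cos (u / 2) + z * sin (u / 2))
       - sin (u / 2) * (x * cos (v / 2) + z * sin (v / 2))) by ring.
    rewrite Hu', Hv'; ring. }
  apply Rmult_integral in D as [D | D]; [contradiction |].
  destruct (Rtotal_order u v) as [Lt | [Eq | Gt]]; [| exact Eq |].
  - assert (0 < sin (v / 2 - u / 2)) by (apply sin_gt_0; lra). lra.
  - assert (0 < sin (u / 2 - v / 2)) by (apply sin_gt_0; lra).
    rewrite <- (Ropp_minus_distr (u / 2)), sin_neg in D. lra.
Qed.

Lemma flowY_hsw g x y u : 0 < u < 2 * PI -> y_switch x (cos g * y) u ->
  flowY u (hsw g x y) = hsw g (- x) y.
Proof.
  intros Hu H. pose proof (y_switch_rotate _ _ _ Hu H) as R.
  unfold y_switch in H. unfold flowY, hsw in *; cbn [v1 v2 v3].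
  f_equal; lra.
Qed.

Section FixedAngle.

Variable g : R.
Hypothesis Hg : 0 < g < PI / 2.

Lemma sin_cos_pos : 0 < sin g /\ 0 < cos g.
Proof. split; [apply sin_gt_0 | apply cos_gt_0]; pose proof PI_RGT_0; lra. Qed.

Lemma rdata_eq_hsw h a b : rdata g h = V3 0 a b <->
  h = hsw g (- a / (sin g * cos g)) (b / (sin g * cos g * cos g)).
Proof.
  destruct sin_cos_pos as [Hs Hc].
  split; intro H.
  - apply (rdata_inj g); [nra |]. rewrite H, rdata_hsw; f_equal; field; lra.
  - rewrite H, rdata_hsw; f_equal; field; lra.
Qed.

Lemma cross_XYX_block T S psi p j l x y :
  normal_extremal g T S psi p -> regular g T S psi p ->
  (j + 3 <= n_arcs S - 1)%nat ->
  lab S j = CX -> lab S (j + 1) = CY -> lab S (j + 2) = CX ->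
  sw S (j + 1) - sw S j = PI / sin g ->
  sw S (j + 2) - sw S (j + 1) = l ->
  sw S (j + 3) - sw S (j + 2) = PI / sin g ->
  0 < l < 2 * PI ->
  cross (psi (sw S j)) (p (sw S j)) = hsw g x y ->
  cross (psi (sw S (j + 3))) (p (sw S (j + 3))) = hsw g (- x) y /\
  y_switch (- x) (cos g * y) l.
Proof.
  intros NE [_ RG] Hj L1 L2 L3 D1 D2 D3 Hl H0.
  destruct sin_cos_pos as [Hs Hc].
  pose proof (cross_on_arc g T S psi p j NE ltac:(lia)) as A1.
  pose proof (cross_on_arc g T S psi p (j + 1) NE ltac:(lia)) as A2.
  pose proof (cross_on_arc g T S psi p (j + 2) NE ltac:(lia)) as A3.
  replace (j + 1 + 1)%nat with (j + 2)%nat in A2 by lia.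
  replace (j + 2 + 1)%nat with (j + 3)%nat in A3 by lia.
  rewrite L1, D1, H0 in A1; cbn [flow] in A1; rewrite flowX_half_turn in A1 by lra.
  rewrite L2, D2, A1 in A2; cbn [flow] in A2.
  rewrite L3, D3, A2 in A3; cbn [flow] in A3.
  assert (Sw : y_switch (- x) (cos g * y) l).
  { destruct (RG (j + 2)%nat ltac:(lia) ltac:(lia)) as [Phi0 _].
    rewrite redd_cross, A2, phi1_flowY_hsw in Phi0.
    apply Rmult_integral in Phi0 as [Z | Z]; [nra | exact Z]. }
  rewrite flowY_hsw, Ropp_involutive, flowX_half_turn in A3 by (auto; lra).
  auto.
Qed.

Lemma Y_arc_from_hsw L x y psi p : 0 < L < 2 * PI -> x <> 0 ->
  y_switch x (cos g * y) L -> Y_arc L psi p ->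
  cross (psi 0) (p 0) = hsw g x y ->
  cross (psi L) (p L) = hsw g (- x) y /\
  (forall u, 0 < u < L -> Phi g (psi u) (p u) <> 0).
Proof.
  intros HL Hx Sw YA H0. destruct sin_cos_pos as [Hs Hc].
  split.
  - rewrite (cross_on_Y_arc L psi p L YA ltac:(lra)), H0.
    apply flowY_hsw; assumption.
  - intros u Hu Z.
    change (Phi g (psi u) (p u)) with (v1 (redd g (psi u) (p u))) in Z.
    rewrite redd_cross, (cross_on_Y_arc L psi p u YA ltac:(lra)), H0,
      phi1_flowY_hsw in Z.
    apply Rmult_integral in Z as [Z | Z]; [nra |].
    assert (u = L) by (apply (y_switch_unique x (cos g * y)); auto; lra).
    lra.
Qed.

Lemma not_time_optimal_of_gt T S psi : PI / (2 * sin g) < T -> ~ time_optimal g T S psi.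
Proof.
  intros HT (_ & _ & _ & Opt). destruct sin_cos_pos as [Hs Hc].
  set (t1 := PI / (2 * sin g)) in *.
  assert (Ht1 : 0 < t1) by (apply Rdiv_lt_0_compat; pose proof PI_RGT_0; lra).
  enough (T <= t1) by lra.
  apply (Opt t1 (Sched 1 (fun i => match i with O => 0 | _ => t1 end) (fun _ => CX))
    (fun t => flow g CX (t - 0) (psi0 g))).
  - repeat split; cbn; try lia; try lra.
    intros [| i] Hi; cbn; [lra | lia].
  - split; [| split].
    + apply cont_vec_flow.
    + now rewrite Rminus_diag, flow_0.
    + intros; apply flow_deriv.
  - unfold inSigma, flow, flowX, psi0; cbn [v1 v2 v3].
    replace (sin g * (t1 - 0)) with (PI / 2) by (unfold t1; field; lra).
    rewrite cos_PI2. ring.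
Qed.

End FixedAngle.

Lemma sw_sub_le S T : admissible S T ->
  forall k i, (i + k <= n_arcs S)%nat -> sw S (i + k) - sw S i <= T.
Proof.
  intros (_ & S0 & ST & Hsw & _).
  assert (Mono : forall k i, (i + k <= n_arcs S)%nat -> sw S i <= sw S (i + k)).
  { induction k as [| k IH]; intros i Hi.
    - rewrite Nat.add_0_r; lra.
    - specialize (IH i ltac:(lia)). specialize (Hsw (i + k)%nat ltac:(lia)).
      replace (i + Datatypes.S k)%nat with (i + k + 1)%nat by lia. lra. }
  intros k i Hi.
  pose proof (Mono i 0%nat ltac:(lia)) as M1.
  pose proof (Mono (n_arcs S - (i + k))%nat (i + k)%nat ltac:(lia)) as M2.
  replace (i + k + (n_arcs S - (i + k)))%nat with (n_arcs S) in M2 by lia.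
  rewrite Nat.add_0_l, S0 in M1. rewrite ST in M2. lra.
Qed.

Theorem mainTheorem12 :
  forall (g : R), 0 < g < PI / 2 ->
  forall (T : R) (S : schedule) (psi p : R -> vec3),
  normal_extremal g T S psi p -> regular g T S psi p ->
  forall (j : nat) (l a b : R),
  (1 <= j)%nat -> (j + 3 <= n_arcs S - 1)%nat ->
  lab S j = CX -> lab S (j + 1) = CY -> lab S (j + 2) = CX ->
  sw S (j + 1) - sw S j = PI / sin g ->
  sw S (j + 2) - sw S (j + 1) = l ->
  sw S (j + 3) - sw S (j + 2) = PI / sin g ->
  0 < l < 2 * PI ->
  redd g (psi (sw S j)) (p (sw S j)) = V3 0 a b -> a <> 0 ->
  redd g (psi (sw S (j + 3))) (p (sw S (j + 3))) = V3 0 (- a) b /\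
  sw S (j + 3) - sw S j = 2 * PI / sin g + l /\
  (exists L, 0 < L < 2 * PI /\ L < sw S (j + 3) - sw S j /\
     forall psi' p', Y_arc L psi' p' ->
       redd g (psi' 0) (p' 0) = V3 0 a b ->
       redd g (psi' L) (p' L) = V3 0 (- a) b /\
       (forall u, 0 < u < L -> Phi g (psi' u) (p' u) <> 0)) /\
  ~ time_optimal g T S psi.
Proof.
  intros g Hg T S psi p NE RG j l a b _ Hj L1 L2 L3 D1 D2 D3 Hl R0 Ha.
  destruct (sin_cos_pos g Hg) as [Hs Hc]. pose proof PI_RGT_0.
  set (x := - a / (sin g * cos g)). set (y := b / (sin g * cos g * cos g)).
  assert (Hx : x <> 0).
  { intro Z; apply Ha.
    replace a with (- (sin g * cos g) * x) by (unfold x; field; lra). rewrite Z; ring. }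
  assert (Hend : rdata g (hsw g (- x) y) = V3 0 (- a) b).
  { apply rdata_eq_hsw; auto. unfold x, y; f_equal; field; lra. }
  rewrite redd_cross in R0.
  destruct (cross_XYX_block g Hg T S psi p j l x y NE RG Hj L1 L2 L3 D1 D2 D3 Hl
    (proj1 (rdata_eq_hsw g Hg _ _ _) R0)) as [Hblock Sw].
  assert (Htime : sw S (j + 3) - sw S j = 2 * PI / sin g + l)
    by (replace (2 * PI / sin g) with (PI / sin g + PI / sin g) by (field; lra); lra).
  assert (Hlong : 2 * PI <= 2 * PI / sin g).
  { pose proof (SIN_bound g). apply (Rmult_le_reg_r (sin g)); [lra |].
    replace (2 * PI / sin g * sin g) with (2 * PI) by (field; lra). nra. }
  assert (Hquarter : 4 * (PI / (2 * sin g)) = 2 * PI / sin g) by (field; lra).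
  split; [| split; [exact Htime | split]].
  - now rewrite redd_cross, Hblock.
  - exists (2 * PI - l). split; [lra | split; [lra |]].
    intros psi' p' YA R0'. rewrite redd_cross in R0'.
    destruct (Y_arc_from_hsw g Hg (2 * PI - l) x y psi' p' ltac:(lra) Hx
      (proj2 (y_switch_complement _ _ _) Sw) YA
      (proj1 (rdata_eq_hsw g Hg _ _ _) R0')) as [HL HPhi].
    now rewrite redd_cross, HL.
  - apply (not_time_optimal_of_gt g Hg).
    pose proof (sw_sub_le S T (proj1 NE) 3 j ltac:(lia)). lra.
Qed.
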